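(* Let $d\in\{2,3\}$, $\kappa>0$, and let $\mathcal{X}\subset\mathbb{R}^d$ be a connected bounded open set. Let $a=(a_1,a_2)\in(\mathbb{C}\setminus\{0\})^2$ and $x=(x_1,x_2)\in\mathcal{X}^2$, and define $\alpha=\kappa^2|G(x_1,x_2)|\sqrt{|a_1||a_2|}$. If $\alpha<1$, then $$\sup_{(\hat{x},\theta)\in\mathbb{S}^{d-1}\times\mathbb{S}^{d-1}}|u^{\infty}(\hat x,\theta)-u^{\infty,b}(\hat x,\theta)|\leq \frac{\kappa^2}{4\pi}\,\frac{2\alpha}{1-\alpha^2}\Big(\alpha\frac{|a_1|+|a_2|}{2}+\sqrt{|a_1||a_2|}\Big).$$
   Context: $G$ is the Green function of the Helmholtz equation with wavenumber $\kappa$: $G(x,y)=\frac{i}{4}H_0^{(1)}(\kappa|x-y|)$ if $d=2$ (with $H_0^{(1)}$ the Hankel function of the first kind and order zero) and $G(x,y)=\frac{e^{i\kappa|x-y|}}{4\pi|x-y|}$ if $d=3$. For $s$ scatterers with intensities $a\in(\mathbb{C}\setminus\{0\})^s$ and pairwise distinct locations $x\in\mathcal{X}^s$, and an incident direction $\theta\in\mathbb{S}^{d-1}$, let $u^{\mathrm{in}}(y)=e^{i\kappa\theta\cdot y}$ and let $u=(u_i)_{1\le i\le s}$ be the solution of the Foldy–Lax system $u_i=u^{\mathrm{in}}(x_i)+\kappa^2\sum_{j\neq i}G(x_i,x_j)a_ju_j$, $i=1,\dots,s$. The far field pattern is $u^{\infty}(\hat x,\theta)=\frac{\kappa^2}{4\pi}\sum_{i=1}^s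 a_iu_ie^{-i\kappa\hat x\cdot x_i}$ and its Born approximation is $u^{\infty,b}(\hat x,\theta)=\frac{\kappa^2}{4\pi}\sum_{i=1}^s a_ie^{-i\kappa(\hat x-\theta)\cdot x_i}$, for $(\hat x,\theta)\in\mathbb{S}^{d-1}\times\mathbb{S}^{d-1}$. Here $s=2$. *)

From HB Require Import structures.
From mathcomp Require Import all_boot all_order all_algebra.
From mathcomp Require Import all_classical all_reals all_analysis.
From mathcomp Require Import complex.
Set Implicit Arguments. Unset Strict Implicit. Unset Printing Implicit Defensive.
Import Order.TTheory GRing.Theory Num.Theory.
Import numFieldNormedType.Exports.
Local Open Scope ring_scope.
Local Open Scope complex_scope.

Section Defs.
Variable R : realType.

Definition dotp (d : nat) (x y : 'rV[R]_d) : R := \sum_(i < d) x 0 i * y 0 i.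
Definition enorm (d : nat) (x : 'rV[R]_d) : R := Num.sqrt (dotp x x).
Definition sphere (d : nat) : set 'rV[R]_d := [set v | enorm v = 1].

Definition cmod (z : R[i]) : R := Num.sqrt (@complex.Re R z ^+ 2 + @complex.Im R z ^+ 2).
Definition expi (t : R) : R[i] := cos t +i* sin t.

Definition harm (k : nat) : R := \sum_(1 <= j < k.+1) (j%:R)^-1.
Definition euler_gamma : R := limn (fun n : nat => harm n - ln n%:R).

(** Bessel functions of order 0 at a real argument r > 0 (DLMF 10.2.2, 10.8.2) *)
Definition besselJ0 (r : R) : R :=
  limn (series (fun k : nat => (-1) ^+ k * (r / 2) ^+ (2 * k) / (k`!%:R) ^+ 2)).
Definition besselY0 (r : R) : R :=
  (2 / pi) * (ln (r / 2) + euler_gamma) * besselJ0 r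
  + (2 / pi) * limn (series (fun k : nat =>
        (-1) ^+ k.+1 * harm k * (r / 2) ^+ (2 * k) / (k`!%:R) ^+ 2)).
Definition hankel10 (r : R) : R[i] := besselJ0 r +i* besselY0 r.

Definition green (d : nat) (kappa : R) (x y : 'rV[R]_d) : R[i] :=
  let r := enorm (x - y) in
  if d == 2%N then (0 +i* (1 / 4)) * hankel10 (kappa * r)
  else expi (kappa * r) / ((4 * pi * r)%:C).

Definition uin (d : nat) (kappa : R) (theta y : 'rV[R]_d) : R[i] :=
  expi (kappa * dotp theta y).

Definition foldy_lax (d s : nat) (kappa : R) (theta : 'rV[R]_d)
    (a : 'I_s -> R[i]) (x : 'I_s -> 'rV[R]_d) (u : 'I_s -> R[i]) : Prop :=
  forall i : 'I_s, u i = uin kappa theta (x i)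
    + (kappa ^+ 2)%:C * \sum_(j < s | j != i) green kappa (x i) (x j) * a j * u j.

Definition far_field (d s : nat) (kappa : R) (a : 'I_s -> R[i])
    (x : 'I_s -> 'rV[R]_d) (u : 'I_s -> R[i]) (xhat : 'rV[R]_d) : R[i] :=
  (kappa ^+ 2 / (4 * pi))%:C *
    \sum_(i < s) a i * u i * expi (- (kappa * dotp xhat (x i))).
Definition far_field_born (d s : nat) (kappa : R) (a : 'I_s -> R[i])
    (x : 'I_s -> 'rV[R]_d) (xhat theta : 'rV[R]_d) : R[i] :=
  (kappa ^+ 2 / (4 * pi))%:C *
    \sum_(i < s) a i * expi (- (kappa * dotp (xhat - theta) (x i))).
End Defs.

(** For two scatterers the Foldy–Lax system is a 2x2 linear system which can be
    solved in closed form: with [g = kappa^2 G(x_1, x_2)] and [p = g^2 a_1 a_2],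
    [u_1 - e_1 = (g a_2 e_2 + p e_1) / (1 - p)], and symmetrically for [u_2],
    where [e_i] are the unimodular incident values.  Since [|p| = alpha^2 < 1]
    this gives [|u_1 - e_1| <= (|g| |a_2| + alpha^2) / (1 - alpha^2)].  The
    far field minus its Born approximation is [kappa^2/(4 pi)] times a sum of
    the [a_i (u_i - e_i)] weighted by unimodular phases; summing the two bounds
    and using [|g| sqrt(|a_1| |a_2|) = alpha] gives exactly the stated right-hand
    side. *)
From HB Require Import structures.
From mathcomp Require Import all_boot all_order all_algebra.
From mathcomp Require Import all_classical all_reals all_analysis.
From mathcomp Require Import complex.
From mathcomp Require Import ring.
Set Implicit Arguments. Unset Strict Implicit. Unset Printing Implicit Defensive.
Import Order.TTheory GRing.Theory Num.Theory.
Import numFieldNormedType.Exports.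
Import ComplexField.Normc.
Local Open Scope classical_set_scope.
Local Open Scope ring_scope.
Local Open Scope complex_scope.

Section ComplexModulus.
Variable R : realType.
Implicit Types z w : R[i].

Lemma cmodE z : cmod z = normc z. Proof. by case: z. Qed.

Lemma cmod_ge0 z : 0 <= cmod z. Proof. exact: sqrtr_ge0. Qed.

Lemma cmod1 : cmod (1 : R[i]) = 1. Proof. by rewrite cmodE normc1. Qed.

Lemma cmodM z w : cmod (z * w) = cmod z * cmod w.
Proof. by rewrite !cmodE normcM. Qed.

Lemma cmodV z : cmod z^-1 = (cmod z)^-1.
Proof. by rewrite !cmodE normcV. Qed.

Lemma cmodD z w : cmod (z + w) <= cmod z + cmod w.
Proof. by rewrite !cmodE le_normcD. Qed.

Lemma lerB_cmod z w : cmod z - cmod w <= cmod (z - w).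
Proof. by rewrite lerBlDr; have := cmodD (z - w) w; rewrite subrK. Qed.

Lemma cmod_sum_le (I : Type) (r : seq I) (P : pred I) (F : I -> R[i]) :
  cmod (\sum_(i <- r | P i) F i) <= \sum_(i <- r | P i) cmod (F i).
Proof.
elim/big_rec2: _ => [|i y z _ IH]; first by rewrite cmodE normc0.
by apply: le_trans (cmodD _ _) _; rewrite lerD2l.
Qed.

Lemma ger0_cmod (c : R) : 0 <= c -> cmod c%:C = c.
Proof. by move=> c0; rewrite /cmod /= expr0n addr0 sqrtr_sqr ger0_norm. Qed.

Lemma cmod_expi (t : R) : cmod (expi t) = 1.
Proof. by rewrite /cmod /= cos2Dsin2 sqrtr1. Qed.

Lemma expiD (s t : R) : expi (s + t) = expi s * expi t.
Proof.
rewrite /expi cosD sinD; apply/eqP; rewrite eq_complex /=.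
by apply/andP; split; apply/eqP; ring.
Qed.

End ComplexModulus.

Lemma big_ord2 (T : Type) (idx : T) (op : Monoid.law idx) (F : 'I_2 -> T) :
  \big[op/idx]_(i < 2) F i = op (F ord0) (F ord_max).
Proof. by rewrite big_ord_recl big_ord1; congr (op _ (F _)); apply: val_inj. Qed.

Section Geometry.
Variables (R : realType) (d : nat).
Implicit Types v w y : 'rV[R]_d.

Lemma dotpBl v w y : dotp (v - w) y = dotp v y - dotp w y.
Proof. by rewrite /dotp -sumrB; apply: eq_bigr => i _; rewrite !mxE mulrBl. Qed.

Lemma enormBC v w : enorm (v - w) = enorm (w - v).
Proof.
rewrite /enorm /dotp -opprB; congr Num.sqrt; apply: eq_bigr => i _.
by rewrite !mxE mulrNN.
Qed.

Lemma greenC (kappa : R) v w : green kappa v w = green kappa w v.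
Proof. by rewrite /green enormBC. Qed.

End Geometry.

Section TwoScatterers.
Variable R : realType.

Lemma foldy_lax2_solve (g a0 a1 e0 e1 u0 u1 : R[i]) :
  let p := g * g * a0 * a1 in
  1 - p != 0 -> u0 = e0 + g * a1 * u1 -> u1 = e1 + g * a0 * u0 ->
  u0 - e0 = (g * a1 * e1 + p * e0) / (1 - p).
Proof.
move=> p p1 FL0 FL1.
have u0E : u0 - e0 = g * a1 * e1 + p * u0 by rewrite {1}FL0 FL1 /p; ring.
apply: (mulfI p1); rewrite [RHS]mulrC divfK // mulrBl mul1r {1}u0E; ring.
Qed.

Lemma foldy_lax2_cmod_le (g a0 a1 e0 e1 u0 u1 : R[i]) :
  let q := cmod (g * g * a0 * a1) in
  cmod e0 = 1 -> cmod e1 = 1 -> q < 1 ->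
  u0 = e0 + g * a1 * u1 -> u1 = e1 + g * a0 * u0 ->
  cmod (u0 - e0) <= (cmod g * cmod a1 + q) / (1 - q).
Proof.
move=> q ce0 ce1 q1 FL0 FL1.
have q1_le : 1 - q <= cmod (1 - g * g * a0 * a1) by rewrite -cmod1 lerB_cmod.
have p1 : 1 - g * g * a0 * a1 != 0.
  by apply: contraTneq q1_le => ->; rewrite cmodE normc0 -ltNge subr_gt0.
rewrite (foldy_lax2_solve p1 FL0 FL1) cmodM cmodV.
apply: ler_pM; rewrite ?invr_ge0 ?cmod_ge0 //.
  apply: le_trans (cmodD _ _) _.
  by rewrite [cmod (_ * e1)]cmodM [cmod (_ * e0)]cmodM ce0 ce1 !mulr1 cmodM.
by rewrite lef_pV2 ?posrE ?subr_gt0 // (lt_le_trans _ q1_le) ?subr_gt0.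
Qed.

Lemma two_scatterer_bound_eq (gn A B s : R) :
  s * s = A * B -> 1 - (gn * s) ^+ 2 != 0 ->
  let alpha := gn * s in
  A * ((gn * B + alpha ^+ 2) / (1 - alpha ^+ 2))
    + B * ((gn * A + alpha ^+ 2) / (1 - alpha ^+ 2))
  = 2 * alpha / (1 - alpha ^+ 2) * (alpha * ((A + B) / 2) + s).
Proof.
move=> s2 nz alpha; apply/eqP; rewrite -subr_eq0; apply/eqP.
transitivity (2 * gn * (A * B - s * s) / (1 - alpha ^+ 2)).
  by rewrite /alpha; field.
by rewrite s2 subrr mulr0 mul0r.
Qed.

End TwoScatterers.

Section FarField.
Variables (R : realType) (d s : nat) (kappa : R).
Variables (a : 'I_s -> R[i]) (x : 'I_s -> 'rV[R]_d) (u : 'I_s -> R[i]).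

Lemma far_field_subBorn (xhat theta : 'rV[R]_d) :
  far_field kappa a x u xhat - far_field_born kappa a x xhat theta
  = (kappa ^+ 2 / (4 * pi))%:C * \sum_(i < s)
      a i * (u i - uin kappa theta (x i)) * expi (- (kappa * dotp xhat (x i))).
Proof.
rewrite /far_field /far_field_born -mulrBr -sumrB; congr (_ * _).
apply: eq_bigr => i _; rewrite dotpBl /uin.
have -> : - (kappa * (dotp xhat (x i) - dotp theta (x i)))
  = - (kappa * dotp xhat (x i)) + kappa * dotp theta (x i) by ring.
by rewrite expiD; ring.
Qed.

Lemma cmod_far_field_subBorn_le (xhat theta : 'rV[R]_d) :
  cmod (far_field kappa a x u xhat - far_field_born kappa a x xhat theta)
  <= kappa ^+ 2 / (4 * pi) * \sum_(i < s)
       cmod (a i) * cmod (u i - uin kappa theta (x i)).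
Proof.
have c0 : 0 <= kappa ^+ 2 / (4 * pi) by rewrite divr_ge0 ?sqr_ge0 ?mulr_ge0 ?pi_ge0.
rewrite far_field_subBorn cmodM ger0_cmod //; apply: ler_wpM2l => //.
apply: le_trans (cmod_sum_le _ _ _) _; apply: ler_sum => i _.
by rewrite !cmodM cmod_expi mulr1.
Qed.

End FarField.

Lemma foldy_lax2 (R : realType) (d : nat) (kappa : R) (theta : 'rV[R]_d)
    (a : 'I_2 -> R[i]) (x : 'I_2 -> 'rV[R]_d) (u : 'I_2 -> R[i]) :
  let g := (kappa ^+ 2)%:C * green kappa (x ord0) (x ord_max) in
  foldy_lax kappa theta a x u ->
  u ord0 = uin kappa theta (x ord0) + g * a ord_max * u ord_max /\
  u ord_max = uin kappa theta (x ord_max) + g * a ord0 * u ord0.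
Proof.
move=> g FL; have FL0 := FL ord0; have FL1 := FL ord_max.
rewrite big_mkcond big_ord2 /= in FL0; rewrite big_mkcond big_ord2 /= in FL1.
split; [rewrite {1}FL0 | rewrite {1}FL1 greenC]; rewrite /g; ring.
Qed.

Theorem proposition1 (R : realType) (d : nat) (hd : d = 2%N \/ d = 3%N)
    (kappa : R) (hkappa : 0 < kappa)
    (X : set 'rV[R]_d) (hXopen : open X) (hXconn : connected X)
    (hXbdd : bounded_set X)
    (a : 'I_2 -> R[i]) (ha : forall i, a i != 0)
    (x : 'I_2 -> 'rV[R]_d) (hxX : forall i, X (x i))
    (hxdist : x ord0 != x ord_max) :
  let alpha := kappa ^+ 2 * cmod (green kappa (x ord0) (x ord_max))
               * Num.sqrt (cmod (a ord0) * cmod (a ord_max)) in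
  alpha < 1 ->
  forall (theta : 'rV[R]_d) (u : 'I_2 -> R[i]),
    sphere theta -> foldy_lax kappa theta a x u ->
  forall xhat : 'rV[R]_d, sphere xhat ->
    cmod (far_field kappa a x u xhat - far_field_born kappa a x xhat theta)
    <= kappa ^+ 2 / (4 * pi) * (2 * alpha / (1 - alpha ^+ 2))
       * (alpha * ((cmod (a ord0) + cmod (a ord_max)) / 2)
          + Num.sqrt (cmod (a ord0) * cmod (a ord_max))).
Proof.
move=> alpha alpha1 theta u _ FL xhat _.
have [FL0 FL1] := foldy_lax2 FL.
set g := _ * green _ _ _ in FL0 FL1.
have alphaE : alpha = cmod g * Num.sqrt (cmod (a ord0) * cmod (a ord_max)).
  by rewrite /alpha /g cmodM ger0_cmod ?sqr_ge0.
clearbody alpha.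
set A := cmod (a ord0) in alphaE *; set B := cmod (a ord_max) in alphaE *.
set s := Num.sqrt (A * B) in alphaE *.
have s2 : s * s = A * B by rewrite -expr2 sqr_sqrtr ?mulr_ge0 ?cmod_ge0.
have alpha0 : 0 <= alpha by rewrite alphaE mulr_ge0 ?cmod_ge0 ?sqrtr_ge0.
have q01 : cmod (g * g * a ord0 * a ord_max) = alpha ^+ 2.
  by rewrite (cmodM (g * g * _)) (cmodM (g * g)) (cmodM g) -/A -/B alphaE -mulrA -s2; ring.
have q10 : cmod (g * g * a ord_max * a ord0) = alpha ^+ 2.
  by rewrite -mulrA [a _ * _]mulrC mulrA.
have alpha2_lt1 : alpha ^+ 2 < 1 by rewrite expr_lt1.
have q01_lt1 : cmod (g * g * a ord0 * a ord_max) < 1 by rewrite q01.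
have q10_lt1 : cmod (g * g * a ord_max * a ord0) < 1 by rewrite q10.
have := foldy_lax2_cmod_le (cmod_expi _) (cmod_expi _) q01_lt1 FL0 FL1.
have := foldy_lax2_cmod_le (cmod_expi _) (cmod_expi _) q10_lt1 FL1 FL0.
rewrite q01 q10 => bound1 bound0.
apply: le_trans (cmod_far_field_subBorn_le _ _ _ _ _ _) _.
rewrite big_ord2 -[leRHS]mulrA; apply: ler_wpM2l.
  by rewrite divr_ge0 ?sqr_ge0 ?mulr_ge0 ?pi_ge0.
apply: le_trans (lerD (ler_wpM2l (cmod_ge0 (a ord0)) bound0)
                      (ler_wpM2l (cmod_ge0 (a ord_max)) bound1)) _.
have nz : 1 - (cmod g * s) ^+ 2 != 0 by rewrite -alphaE subr_eq0 eq_sym lt_eqF.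
by have /= := two_scatterer_bound_eq s2 nz; rewrite -alphaE => ->.
Qed.
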